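(* Let $m\ge1$, $n=2^m-1$, and let $\iota,\kappa\in\dot F^m$ be such that the Hamming distances $d(\iota,0^m)$, $d(\kappa,0^m)$ and $d(\iota,\kappa)$ are all at least $3$. Then the sets $R_\iota+\hat\iota+\bar e^{(\iota)}$ and $R_\kappa+\hat\kappa+\bar e^{(\kappa)}$ are disjoint, and neither of them contains $0^n$.
   Context: $F^m$ denotes the vector space of binary $m$-tuples over $GF(2)$, and $\dot F^m := F^m\setminus\{0^m\}$. Let $\pi^{(1)}=(10\ldots0),\ldots,\pi^{(m)}=(0\ldots01)$ be the standard basis of $F^m$. The coordinates of words $\bar w\in F^n$ ($n=2^m-1$) are indexed by the elements of $\dot F^m$, $\bar w=\{w_\alpha\}_{\alpha\in\dot F^m}$, where the first $m$ coordinates have indices $\pi^{(1)},\ldots,\pi^{(m)}$ (in this order) and the remaining $n-m$ indices are in some fixed order. $\bar e^{(\iota)}\in F^n$ is the word with a single $1$ in the coordinate indexed by $\iota$. For $\alpha\in F^m$, $\hat\alpha := (\alpha,0^{n-m})\in F^n$, i.e. $\hat\alpha=\sum_{i=1}^m \alpha_i \bar e^{(\pi^{(i)})}$. The Hamming code is $H:=\{\bar c\in F^n \mid \sum_{\alpha\in\dot F^m} c_\alpha\alpha = 0^m\}$. For $\iota\in\dot F^m$, $R_\iota := \{\bar c\in H \mid c_\alpha=c_{\alpha+\iota} \text{ for all } \alpha\in F^m\setminus\{0^m,\iota\}\}$. $d(\cdot,\cdot)$ is the Hamming distance. *)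

From HB Require Import structures.
From mathcomp Require Import all_boot all_order all_algebra.
Set Implicit Arguments. Unset Strict Implicit. Unset Printing Implicit Defensive.
Import GRing.Theory.
Local Open Scope ring_scope.

Notation Fm m := 'rV['F_2]_m.

(* Index set \dot F^m = F^m \ {0^m}; words of F^n (n = 2^m - 1) are indexed by it. *)
Definition idx (m : nat) := {x : Fm m | x != 0}.
Notation word m := {ffun idx m -> 'F_2}.

Definition pi_ (m : nat) (i : 'I_m) : Fm m := delta_mx 0 i.

Definition hdist (m : nat) (x y : Fm m) : nat := #|[set i : 'I_m | x 0 i != y 0 i]|.

Definition unitw (m : nat) (iota : Fm m) : word m :=
  [ffun a : idx m => ((val a == iota) : nat)%:R].

Definition hatw (m : nat) (alpha : Fm m) : word m :=
  [ffun a : idx m => \sum_(i < m) alpha 0 i * unitw (pi_ i) a].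

Definition inH (m : nat) (c : word m) : bool :=
  \sum_(a : idx m) c a *: (val a : Fm m) == 0.

Definition R_ (m : nat) (iota : Fm m) : {set word m} :=
  [set c : word m | inH c &&
     [forall a : idx m, forall b : idx m, (val b == val a + iota) ==> (c a == c b)]].

(* the translate R_iota + hat iota + e^(iota) = { c + v | c in R_iota } = { w | w - v in R_iota } *)
Definition Rshift (m : nat) (iota : Fm m) : {set word m} :=
  [set w : word m | (w - (hatw iota + unitw iota)) \in R_ iota].

(* Fix a coordinate i where iota and kappa differ and look at the four indices
   pi^(i), pi^(i)+iota, pi^(i)+kappa, pi^(i)+iota+kappa.  The weight conditions
   put the last three outside the support {pi^(1..m), iota, kappa} of both shift
   words, so a word in both translates, being iota-symmetric and kappa-symmetric
   after the shift, yields
     w(pi^(i)) - iota_i = w(pi^(i)+iota) = w(pi^(i)+iota+kappa)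
                        = w(pi^(i)+kappa) = w(pi^(i)) - kappa_i,
   i.e. iota_i = kappa_i.  The same first step with w = 0 gives iota = 0. *)

From mathcomp Require Import all_boot all_order all_algebra.
Import GRing.Theory.
Set Implicit Arguments. Unset Strict Implicit. Unset Printing Implicit Defensive.
Local Open Scope ring_scope.

Notation wt x := (hdist x 0).

Section BinaryVectors.
Variable m : nat.
Implicit Types (x y : Fm m) (i j : 'I_m).

Lemma addxx x : x + x = 0.
Proof.
by apply/matrixP => r k; rewrite !mxE; apply: addrr_pchar2; apply: pchar_Fp.
Qed.

Lemma hdistE x y : hdist x y = wt (x + y).
Proof.
apply: eq_card => k; rewrite !inE !mxE.
by rewrite -subr_eq0 (oppr_pchar2 (pchar_Fp _)).
Qed.

Lemma hdistxx x : hdist x x = 0%N.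
Proof. by apply: eq_card0 => k; rewrite inE eqxx. Qed.

Lemma wtD x y : (wt (x + y) <= wt x + wt y)%N.
Proof.
rewrite /hdist; apply: leq_trans (leq_card_setU _ _).
apply/subset_leq_card/subsetP => k; rewrite !inE !mxE.
by apply: contraNT; rewrite negb_or !negbK => /andP[/eqP-> /eqP->]; rewrite addr0.
Qed.

Lemma wt_pi i : wt (pi_ i) = 1%N.
Proof.
rewrite /hdist (_ : [set _ | _] = [set i]) ?cards1 //; apply/setP => k.
by rewrite !inE !mxE eqxx; case: (k == i); rewrite ?oner_eq0 ?eqxx.
Qed.

Lemma pi_neq0 i : pi_ i != 0.
Proof. by apply: contra_eq_neq (wt_pi i) => ->; rewrite hdistxx. Qed.

Lemma pi_inj : injective (@pi_ m).
Proof.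
move=> i j /matrixP/(_ 0 i); rewrite !mxE !eqxx /=.
by case: eqP => // _ /eqP; rewrite oner_eq0.
Qed.

Lemma addpi_neq x y i : wt (x + y) != 1%N -> pi_ i + x != y.
Proof. by apply: contra_neq => <-; rewrite addrCA addxx addr0 wt_pi. Qed.

Lemma wt_neq1 x : (3 <= wt x)%N -> wt x != 1%N.
Proof. by apply: contraTneq => ->. Qed.

Lemma addpi_neq0 x i : (3 <= wt x)%N -> pi_ i + x != 0.
Proof. by move=> wt_x; apply: addpi_neq; rewrite addr0 wt_neq1. Qed.

Lemma addpi_neq_pi x i j : (3 <= wt x)%N -> pi_ i + x != pi_ j.
Proof.
move=> wt_x; apply/eqP => Ex.
have {}Ex : x = pi_ i + pi_ j by rewrite -Ex addrA addxx add0r.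
by move: wt_x; rewrite Ex => /leq_trans/(_ (wtD _ _)); rewrite !wt_pi.
Qed.

End BinaryVectors.

Section ShiftWord.
Variable m : nat.
Implicit Types (alpha iota x : Fm m) (a b : idx m).

Lemma hatw_pi alpha a i : val a = pi_ i -> hatw alpha a = alpha 0 i.
Proof.
move=> Ea; rewrite ffunE (bigD1 i) //= ffunE Ea eqxx mulr1 big1 ?addr0 // => j ji.
by rewrite ffunE Ea (inj_eq (@pi_inj _)) eq_sym (negbTE ji) mulr0.
Qed.

Lemma hatw_off alpha a : (forall j, val a != pi_ j) -> hatw alpha a = 0.
Proof.
by move=> a_pi; rewrite ffunE big1 // => j _; rewrite ffunE (negbTE (a_pi j)) mulr0.
Qed.

Variable iota : Fm m.
Hypothesis wt_iota : (3 <= wt iota)%N.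

Let shift : word m := hatw iota + unitw iota.

Lemma shift_pi a i : val a = pi_ i -> shift a = iota 0 i.
Proof.
move=> Ea; rewrite ffunE (hatw_pi _ Ea) ffunE Ea.
have /negbTE -> : pi_ i != iota.
  by rewrite -[pi_ i]addr0 addpi_neq // add0r; apply: contraTneq wt_iota => ->.
by rewrite addr0.
Qed.

Lemma shift_translate a x i :
  val a = pi_ i + x -> (3 <= wt x)%N -> wt (x + iota) != 1%N -> shift a = 0.
Proof.
move=> Ea wt_x wt_xi; rewrite ffunE hatw_off => [|j]; last by rewrite Ea addpi_neq_pi.
by rewrite ffunE Ea (negbTE (addpi_neq _ wt_xi)) addr0.
Qed.

Lemma Rshift_pair (w : word m) a b :
  w \in Rshift iota -> val b = val a + iota -> w a - shift a = w b - shift b.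
Proof.
rewrite inE inE => /andP[_ /forallP/(_ a)/forallP/(_ b)/implyP sym_ab] Eb.
by move/eqP: (sym_ab (introT eqP Eb)); rewrite !ffunE.
Qed.

Lemma Rshift_pi (w : word m) a b i : w \in Rshift iota ->
  val a = pi_ i -> val b = val a + iota -> w a - iota 0 i = w b.
Proof.
move=> w_iota Ea Eb; have := Rshift_pair w_iota Eb.
rewrite (shift_pi Ea) (@shift_translate b iota i) ?subr0 -?Ea //.
by rewrite addxx hdistxx.
Qed.

Lemma Rshift_translate (w : word m) a b x i : w \in Rshift iota ->
  (3 <= wt x)%N -> (3 <= wt (x + iota))%N ->
  val a = pi_ i + x -> val b = val a + iota -> w a = w b.
Proof.
move=> w_iota wt_x wt_xi Ea Eb; have := Rshift_pair w_iota Eb.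
rewrite (shift_translate Ea wt_x (wt_neq1 wt_xi)) (@shift_translate b (x + iota) i).
- by rewrite !subr0.
- by rewrite Eb Ea addrA.
- by [].
by rewrite -addrA addxx addr0 wt_neq1.
Qed.

End ShiftWord.

Lemma Rshift0 m (iota : Fm m) :
  (3 <= wt iota)%N -> (0 : word m) \in Rshift iota -> iota = 0.
Proof.
move=> wt_iota zero_iota; apply/matrixP => r i; rewrite ord1 mxE.
pose a : idx m := exist _ (pi_ i) (pi_neq0 i).
pose b : idx m := exist _ (pi_ i + _) (addpi_neq0 i wt_iota).
have := Rshift_pi wt_iota zero_iota (a := a) (b := b) erefl erefl.
by rewrite !ffunE sub0r => /eqP; rewrite oppr_eq0 => /eqP.
Qed.

Lemma Rshift_meet m (iota kappa : Fm m) (w : word m) :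
  (3 <= wt iota)%N -> (3 <= wt kappa)%N -> (3 <= hdist iota kappa)%N ->
  w \in Rshift iota -> w \in Rshift kappa -> iota = kappa.
Proof.
move=> wt_iota wt_kappa; rewrite hdistE => wt_ik w_iota w_kappa.
apply/matrixP => r i; rewrite ord1.
pose a0 : idx m := exist _ (pi_ i) (pi_neq0 i).
pose a1 : idx m := exist _ (pi_ i + _) (addpi_neq0 i wt_iota).
pose a2 : idx m := exist _ (pi_ i + _) (addpi_neq0 i wt_kappa).
pose a3 : idx m := exist _ (pi_ i + _) (addpi_neq0 i wt_ik).
have wt_ki : (3 <= wt (kappa + iota))%N by rewrite addrC.
have E01 : w a0 - iota 0 i = w a1 :=
  Rshift_pi wt_iota w_iota (a := a0) (b := a1) erefl erefl.
have E02 : w a0 - kappa 0 i = w a2 :=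
  Rshift_pi wt_kappa w_kappa (a := a0) (b := a2) erefl erefl.
have E23 : w a2 = w a3.
  apply: (Rshift_translate w_iota wt_kappa wt_ki (a := a2) erefl).
  by rewrite /= addrAC addrA.
have E13 : w a1 = w a3.
  apply: (Rshift_translate w_kappa wt_iota wt_ik (a := a1) erefl).
  by rewrite /= addrA.
by apply/oppr_inj/(addrI (w a0)); rewrite E01 E02 E13 E23.
Qed.

Theorem lemma3 (m : nat) (iota kappa : Fm m) :
  (1 <= m)%N -> iota != 0 -> kappa != 0 ->
  (3 <= hdist iota 0)%N -> (3 <= hdist kappa 0)%N -> (3 <= hdist iota kappa)%N ->
  [disjoint Rshift iota & Rshift kappa] /\
  (0 : word m) \notin Rshift iota /\ (0 : word m) \notin Rshift kappa.
Proof.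
(* The first three hypotheses are implied by the weight bounds. *)
move=> _ _ _ wt_iota wt_kappa dist_ik.
have Rshift0_notin x : (3 <= wt x)%N -> (0 : word m) \notin Rshift x.
  by move=> wt_x; apply/negP => /(Rshift0 wt_x) x0; rewrite x0 hdistxx in wt_x.
split; last by split; apply: Rshift0_notin.
apply/pred0P => w /=; apply/negP => /andP[w_iota w_kappa].
have ik := Rshift_meet wt_iota wt_kappa dist_ik w_iota w_kappa.
by rewrite ik hdistxx in dist_ik.
Qed.
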